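(* Let $G$ be a bipartite graph of boxicity $b$. Then $G$ belongs to $(b+1)$-CBU.
   Context: Let $e_1,\ldots,e_d$ be the standard orthogonal basis of $\mathbb{R}^d$. An axis-parallel box in $\mathbb{R}^d$ is a product $I_1\times\cdots\times I_d$ of closed intervals of positive length. For $d\ge 1$, a graph $G$ belongs to $d$-CBU if one can assign to each vertex an axis-parallel box in $\mathbb{R}^d$ such that the boxes have pairwise disjoint interiors, two distinct vertices are adjacent if and only if their boxes intersect, and any two intersecting boxes intersect in a $(d-1)$-dimensional box orthogonal to $e_1$ (i.e. lying in a hyperplane orthogonal to $e_1$). The boxicity of a graph is the minimum dimension $b$ such that the graph is the intersection graph of axis-parallel boxes in $\mathbb{R}^b$. *)

From mathcomp Require Import all_boot all_order all_algebra.
From mathcomp Require Import reals.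
Set Implicit Arguments. Unset Strict Implicit. Unset Printing Implicit Defensive.
Import Order.TTheory GRing.Theory Num.Theory.
Local Open Scope ring_scope.

Definition simple_graph (T : finType) (e : rel T) : Prop :=
  (forall u v, e u v = e v u) /\ (forall u, ~~ e u u).

Definition bipartite (T : finType) (e : rel T) : Prop :=
  exists c : T -> bool, forall u v, e u v -> c u != c v.

Record boxes (R : realType) (T : finType) (d : nat) := Boxes {
  lo : T -> 'I_d -> R;
  hi : T -> 'I_d -> R;
  lo_lt_hi : forall v i, lo v i < hi v i }.

Definition box_meet (R : realType) (T : finType) (d : nat) (B : boxes R T d)
  (u v : T) : Prop :=
  forall i : 'I_d, lo B u i <= hi B v i /\ lo B v i <= hi B u i.

Definition interiors_disjoint (R : realType) (T : finType) (d : nat)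
  (B : boxes R T d) (u v : T) : Prop :=
  exists i : 'I_d, hi B u i <= lo B v i \/ hi B v i <= lo B u i.

Definition box_representation (R : realType) (T : finType) (e : rel T)
  (d : nat) (B : boxes R T d) : Prop :=
  forall u v, u != v -> (e u v <-> box_meet B u v).

Definition has_boxicity (R : realType) (T : finType) (e : rel T) (b : nat) : Prop :=
  (exists B : boxes R T b, box_representation e B) /\
  (forall (b' : nat) (B : boxes R T b'), box_representation e B -> (b <= b')%N).

(* The intersection of boxes u and v (assumed to meet) is a (d-1)-dimensional
   box lying in a hyperplane orthogonal to e_1 (coordinate ord0): it is a
   single point in coordinate 0 and has positive length in all others. *)
Definition meet_orth_e1 (R : realType) (T : finType) (d : nat)
  (B : boxes R T d.+1) (u v : T) : Prop :=
  Num.max (lo B u ord0) (lo B v ord0) = Num.min (hi B u ord0) (hi B v ord0) /\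
  (forall i : 'I_d.+1, i != ord0 ->
     Num.max (lo B u i) (lo B v i) < Num.min (hi B u i) (hi B v i)).

(* G belongs to (d+1)-CBU (the dimension d.+1 is >= 1). *)
Definition in_CBU (R : realType) (T : finType) (e : rel T) (d : nat) : Prop :=
  exists B : boxes R T d.+1,
    (forall u v, u != v -> interiors_disjoint B u v) /\
    box_representation e B /\
    (forall u v, u != v -> box_meet B u v -> meet_orth_e1 B u v).

From mathcomp Require Import all_boot all_order all_algebra.
From mathcomp Require Import reals.
From mathcomp Require Import lra.
Set Implicit Arguments. Unset Strict Implicit. Unset Printing Implicit Defensive.
Import Order.TTheory GRing.Theory Num.Theory.
Local Open Scope ring_scope.

(* Take a box representation in R^b and a proper 2-colouring c.  Enlarge every
   box by a margin r smaller than a third of every strict gap between box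
   projections: this keeps the intersection graph and makes every intersection
   full-dimensional.  Then add a new first coordinate in which the boxes of
   colour 0 are [0, 1] and those of colour 1 are [1, 2]: adjacent vertices meet
   exactly in the hyperplane x_1 = 1, and two vertices of the same colour,
   being non-adjacent, are still strictly separated in an old coordinate. *)

Lemma box_meetP (R : realType) (T : finType) (d : nat) (B : boxes R T d) u v :
  reflect (box_meet B u v)
          [forall i, (lo B u i <= hi B v i) && (lo B v i <= hi B u i)].
Proof. by apply: (iffP forallP) => meet i; apply/andP. Qed.

Lemma not_box_meet_gap (R : realType) (T : finType) (d : nat) (B : boxes R T d) u v :
  ~ box_meet B u v -> exists i, hi B u i < lo B v i \/ hi B v i < lo B u i.
Proof.
move/box_meetP; rewrite negb_forall => /existsP [i].
by rewrite negb_and -!ltNge => /orP [gap | gap]; exists i; [right | left].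
Qed.

Lemma exists_separation_margin (R : realType) (T : finType) (d : nat)
    (B : boxes R T d) :
  exists2 r : R, 0 < r &
    forall u v i, hi B u i < lo B v i -> hi B u i + r < lo B v i - r.
Proof.
pose gap (x : T * T * 'I_d) := lo B x.1.2 x.2 - hi B x.1.1 x.2.
pose m := \big[Num.min/1]_(x | 0 < gap x) gap x.
have m_gt0 : 0 < m by apply: (big_ind (fun x => 0 < x)) => // x y x_gt0 y_gt0; rewrite lt_min x_gt0.
have m_le_gap x : 0 < gap x -> m <= gap x.
  by move=> gap_x; rewrite /m (bigD1 x) //= ge_min lexx.
exists (m / 3); first by rewrite divr_gt0.
move=> u v i; rewrite -subr_gt0 => /(m_le_gap (u, v, i)); rewrite /gap /=; lra.
Qed.

Section CBUBoxes.

Variables (R : realType) (T : finType) (d : nat) (B : boxes R T d).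
Variables (c : T -> bool) (r : R).
Hypothesis r_gt0 : 0 < r.
(* [lra] does not see section hypotheses, hence the explicit [have := r_gt0] below. *)

Definition cbu_lo v (j : 'I_d.+1) : R :=
  if unlift ord0 j is Some i then lo B v i - r else (c v)%:R.

Definition cbu_hi v (j : 'I_d.+1) : R :=
  if unlift ord0 j is Some i then hi B v i + r else (c v)%:R + 1.

Lemma cbu_lo_lt_hi v j : cbu_lo v j < cbu_hi v j.
Proof.
rewrite /cbu_lo /cbu_hi; case: unlift => [i|]; last by rewrite ltrDl.
have := lo_lt_hi B v i; have := r_gt0; lra.
Qed.

Definition cbu_boxes := Boxes cbu_lo_lt_hi.

Lemma cbu_lo_lift v i : lo cbu_boxes v (lift ord0 i) = lo B v i - r.
Proof. by rewrite /= /cbu_lo liftK. Qed.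

Lemma cbu_hi_lift v i : hi cbu_boxes v (lift ord0 i) = hi B v i + r.
Proof. by rewrite /= /cbu_hi liftK. Qed.

Lemma cbu_lo0 v : lo cbu_boxes v ord0 = (c v)%:R.
Proof. by rewrite /= /cbu_lo unlift_none. Qed.

Lemma cbu_hi0 v : hi cbu_boxes v ord0 = (c v)%:R + 1.
Proof. by rewrite /= /cbu_hi unlift_none. Qed.

Lemma interiors_disjoint_cbu_colour u v :
  c u != c v -> interiors_disjoint cbu_boxes u v.
Proof.
move=> cuv; exists ord0; rewrite !cbu_lo0 !cbu_hi0.
by case: (c u) (c v) cuv => -[] //= _; [right | left]; lra.
Qed.

Lemma meet_orth_e1_cbu u v :
  c u != c v -> box_meet B u v -> meet_orth_e1 cbu_boxes u v.
Proof.
move=> cuv meet; split.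
  rewrite !cbu_lo0 !cbu_hi0.
  case: (c u) (c v) cuv => -[] //= _; rewrite add0r.
    by rewrite max_l ?min_r //; lra.
  by rewrite max_r ?min_l //; lra.
move=> j; case: (unliftP ord0 j) => [i -> _ | ->]; last by rewrite eqxx.
rewrite !cbu_lo_lift !cbu_hi_lift lt_min !gt_max.
have [] := meet i; have := lo_lt_hi B u i; have := lo_lt_hi B v i; have := r_gt0.
by move=> *; rewrite -!andbA; apply/and4P; split; lra.
Qed.

Hypothesis r_margin :
  forall u v i, hi B u i < lo B v i -> hi B u i + r < lo B v i - r.

Lemma box_meet_cbu u v : box_meet cbu_boxes u v <-> box_meet B u v.
Proof.
split=> meet i.
  have [] := meet (lift ord0 i); rewrite !cbu_lo_lift !cbu_hi_lift => meet_uv meet_vu.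
  by split; rewrite leNgt; apply/negP => /r_margin; lra.
case: (unliftP ord0 i) => [j -> | ->].
  by rewrite !cbu_lo_lift !cbu_hi_lift; have := r_gt0; have [] := meet j; split; lra.
by rewrite !cbu_lo0 !cbu_hi0; case: (c u) (c v) => -[] /=; split; lra.
Qed.

Lemma interiors_disjoint_cbu_gap u v :
  ~ box_meet B u v -> interiors_disjoint cbu_boxes u v.
Proof.
move/not_box_meet_gap => [i gap]; exists (lift ord0 i).
by rewrite !cbu_lo_lift !cbu_hi_lift; case: gap => /r_margin; [left | right]; lra.
Qed.

End CBUBoxes.

Lemma bipartite_box_representation_in_CBU (R : realType) (T : finType)
    (e : rel T) (d : nat) (B : boxes R T d) :
  bipartite e -> box_representation e B -> in_CBU R e d.
Proof.
move=> [c c_proper] repB; have [r r_gt0 r_margin] := exists_separation_margin B.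
have meet_cbu := box_meet_cbu c r_gt0 r_margin.
exists (cbu_boxes B c r_gt0); split; [|split].
- move=> u v uv; case: (eqVneq (c u) (c v)) => [cuv | cuv].
    apply: interiors_disjoint_cbu_gap => // /(repB u v uv)/c_proper.
    by rewrite cuv eqxx.
  exact: interiors_disjoint_cbu_colour.
- by move=> u v uv; rewrite meet_cbu; exact: repB.
- move=> u v uv /meet_cbu meet; apply: meet_orth_e1_cbu => //.
  by apply: c_proper; apply/(repB u v uv).
Qed.

Theorem mainTheorem1 (R : realType) (T : finType) (e : rel T) (b : nat) :
  simple_graph e -> bipartite e -> has_boxicity R e b -> in_CBU R e b.
Proof.
move=> _ bip [[B repB] _].
exact: bipartite_box_representation_in_CBU bip repB.
Qed.
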